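(* For every integer $m\ge0$ and $n\ge0$, $$x^n=\sum_{k=0}^{\lfloor n/2\rfloor}\frac{[n]!}{[k]!\,[n-2k]!}\,\frac{[n+m-2k]!}{[n+m-k]!}\,\frac{q^ks^k}{(-q;q)_k\,(-q^{n+m+1-2k};q)_k}\,v_{n-2k}(x,m,s,q).$$ Consequently, if $\Phi_{m,q}$ is the linear functional on polynomials in $x$ determined by $\Phi_{m,q}(v_n(x,m,1,q))=[n=0]$ for all $n\ge 0$, then $\Phi_{m,q}(x^{2n+1})=0$ and $$\Phi_{m,q}(x^{2n})=\frac{q^n}{(-q;q)_n\,(-q^{m+1};q)_n}\cdot\frac{[2n]!\,[m]!}{[n]!\,[m+n]!}\quad(n\ge0).$$
   Context: $q$ is an indeterminate; $[n]=\frac{1-q^n}{1-q}$, $[n]!=[1]\cdots[n]$, $[0]!=1$, $(a;q)_n=(1-a)(1-qa)\cdots(1-q^{n-1}a)$, $(a;q)_0=1$. For an integer $m\ge 0$ and indeterminates $x,s$, $$v_n(x,m,s,q)=\sum_{k=0}^{\lfloor n/2\rfloor}(-s)^kq^{k^2}\frac{[n]!}{[k]!\,[n-2k]!}\,\frac{[m+n-k-1]!}{[m+n-1]!}\,\frac{1}{(-q;q)_k\,(-q^{n+m-k};q)_k}\,x^{n-2k}\quad(n\ge1),\qquad v_0=1.$$ $[P]$ is the Iverson bracket. *)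

From HB Require Import structures.
From mathcomp Require Import all_boot all_order all_algebra.
Set Implicit Arguments. Unset Strict Implicit. Unset Printing Implicit Defensive.
Import Order.TTheory GRing.Theory Num.Theory.
Local Open Scope ring_scope.

Section QDefs.
Variable F : fieldType.
Variable q : F.

Definition qint (n : nat) : F := \sum_(i < n) q ^+ i.
Definition qfact (n : nat) : F := \prod_(i < n) qint i.+1.
Definition qpoch (a : F) (n : nat) : F := \prod_(i < n) (1 - q ^+ i * a).

Definition vpoly (m : nat) (s : F) (n : nat) : {poly F} :=
  if n is 0 then 1 else
  \sum_(k < n./2.+1)
    ((- s) ^+ k * q ^+ (k * k)
      * (qfact n / (qfact k * qfact (n - 2 * k)))
      * (qfact (m + n - k - 1) / qfact (m + n - 1))
      / (qpoch (- q) k * qpoch (- q ^+ (n + m - k)) k))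
    *: 'X ^+ (n - 2 * k).

End QDefs.

(* The polynomials v_n obey the three-term recurrence
   x v_(n+1) = v_(n+2) + lam_(n+1) v_n, where lam_n is the difference of the
   coefficients of x^(n-2) in v_n and of x^(n-1) in v_(n+1); comparing
   coefficients reduces it to two rational identities between the explicit
   coefficients of the v_n.  Multiplying an expansion
   x^n = sum_k c(n,k) v_(n-2k) by x and using the recurrence shows that the
   c(n,k) of the statement work as soon as
   c(n+1,k+1) = c(n,k+1) + lam_(n-2k) c(n,k), which again comes down to two
   rational identities.  A functional with Phi(v_j) = [j = 0] then sees only
   the v_0 term of the expansion: nothing for odd powers and c(2n,n) for x^(2n). *)

From HB Require Import structures.
From mathcomp Require Import all_boot all_order all_algebra.
From mathcomp Require Import ring zify.
Set Implicit Arguments. Unset Strict Implicit. Unset Printing Implicit Defensive.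
Import Order.TTheory GRing.Theory Num.Theory.
Local Open Scope ring_scope.

Section QCalculus.
Variables (F : fieldType) (q : F).

Lemma qfact0 : qfact q 0 = 1.
Proof. by rewrite /qfact big_ord0. Qed.

Lemma qfactS n : qfact q n.+1 = qfact q n * qint q n.+1.
Proof. by rewrite /qfact big_ord_recr. Qed.

Lemma qintE n : q != 1 -> qint q n = (1 - q ^+ n) / (1 - q).
Proof.
move=> q_neq1; have q1_neq0 : 1 - q != 0 by rewrite subr_eq0 eq_sym.
apply: (mulIf q1_neq0); rewrite mulfVK // /qint.
by rewrite -(opprB (q ^+ n)) subrX1 -mulNr opprB mulrC.
Qed.

Lemma qpoch0 a : qpoch q a 0 = 1.
Proof. by rewrite /qpoch big_ord0. Qed.

Lemma qpochS a k : qpoch q a k.+1 = qpoch q a k * (1 - q ^+ k * a).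
Proof. by rewrite /qpoch big_ord_recr. Qed.

Lemma qpochSl a k : qpoch q a k.+1 = (1 - a) * qpoch q (q * a) k.
Proof.
rewrite /qpoch big_ord_recl expr0 mul1r; congr (_ * _).
by apply: eq_bigr => i _; rewrite lift0 exprSr -mulrA [q * a]mulrC mulrA.
Qed.

Lemma qpochNXSl j k :
  qpoch q (- q ^+ j) k.+1 = (1 + q ^+ j) * qpoch q (- q ^+ j.+1) k.
Proof. by rewrite qpochSl opprK mulrN -exprS. Qed.

Lemma qpochNXS j k :
  qpoch q (- q ^+ j) k.+1 = qpoch q (- q ^+ j) k * (1 + q ^+ (k + j)).
Proof. by rewrite qpochS mulrN opprK exprD. Qed.

End QCalculus.

Section QNonvanishing.
Variables (F : fieldType) (q : F).
Hypothesis q_not_root1 : forall j : nat, (0 < j)%N -> q ^+ j != 1.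

Lemma q_neq1 : q != 1.
Proof. by have := @q_not_root1 1 isT; rewrite expr1. Qed.

Lemma subr1X_neq0 j : (0 < j)%N -> 1 - q ^+ j != 0.
Proof. by move=> /q_not_root1; rewrite subr_eq0 eq_sym. Qed.

Lemma addr1X_neq0 j : (0 < j)%N -> 1 + q ^+ j != 0.
Proof.
move=> j_gt0; have q2j_neq1 : q ^+ (2 * j) != 1 by rewrite q_not_root1 // muln_gt0.
apply: contraTneq q2j_neq1 => qj_eq; rewrite mulnC exprM.
have -> : q ^+ j = -1 by apply/eqP; rewrite -subr_eq0 opprK addrC qj_eq.
by rewrite sqrrN expr1n eqxx.
Qed.

Lemma qint_neq0 j : (0 < j)%N -> qint q j != 0.
Proof.
move=> j_gt0; rewrite qintE ?q_neq1 // mulf_neq0 ?invr_eq0 ?subr1X_neq0 //.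
by rewrite -[q]expr1 subr1X_neq0.
Qed.

Lemma qfact_neq0 n : qfact q n != 0.
Proof. by apply/prodf_neq0 => i _; apply: qint_neq0. Qed.

Lemma qpochNX_neq0 j k : (0 < j)%N -> qpoch q (- q ^+ j) k != 0.
Proof.
move=> j_gt0; apply/prodf_neq0 => i _.
by rewrite mulrN opprK -exprD addr1X_neq0 // addn_gt0 j_gt0 orbT.
Qed.

Lemma qpochNX_shift j k : (0 < j)%N ->
  qpoch q (- q ^+ j) k = (1 + q ^+ j) * qpoch q (- q ^+ j.+1) k / (1 + q ^+ (k + j)).
Proof.
by move=> j_gt0; rewrite -qpochNXSl qpochNXS mulfK // addr1X_neq0 // addn_gt0 j_gt0 orbT.
Qed.

End QNonvanishing.

Lemma sum_vanishing_tail (V : nmodType) (f : nat -> V) n B :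
  (n./2 < B)%N -> (forall k, (n < 2 * k)%N -> f k = 0) ->
  \sum_(k < B) f k = \sum_(k < n./2.+1) f k.
Proof.
move=> n_lt_B f_tail; rewrite (big_ord_widen B f n_lt_B) [RHS]big_mkcond.
by apply: eq_bigr => k _; case: ifP => // k_big; rewrite f_tail //; lia.
Qed.

Section ParityPolynomials.
Variables (F : fieldType) (A : algType F) (x : A).

Definition parity_poly (a : nat -> nat -> F) (n : nat) : A :=
  \sum_(k < n.+1) a n k *: x ^+ (n - 2 * k).

Variables (a : nat -> nat -> F) (lam : nat -> F).
Hypothesis a_0 : forall n, a n 0 = 1.
Hypothesis a_out : forall n k, (n < 2 * k)%N -> a n k = 0.

Lemma parity_poly_widen n B : (n < B)%N ->
  parity_poly a n = \sum_(k < B) a n k *: x ^+ (n - 2 * k).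
Proof.
move=> n_lt_B; rewrite /parity_poly.
have tail k : (n < 2 * k)%N -> a n k *: x ^+ (n - 2 * k) = 0.
  by move=> /a_out ->; rewrite scale0r.
rewrite (@sum_vanishing_tail _ _ n n.+1 _ tail) ?(@sum_vanishing_tail _ _ n B _ tail) //.
all: lia.
Qed.

Lemma parity_poly0 : parity_poly a 0 = 1.
Proof. by rewrite /parity_poly big_ord1 a_0 scale1r. Qed.

Lemma mulX_parity_poly0 : x * parity_poly a 0 = parity_poly a 1.
Proof.
rewrite parity_poly0 mulr1 /parity_poly big_ord_recl big_ord1.
by rewrite a_0 a_out // scale0r addr0 scale1r.
Qed.

Hypothesis a_rec : forall n k, (2 * k.+1 <= n.+2)%N ->
  a n.+1 k.+1 = a n.+2 k.+1 + lam n.+1 * a n k.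

Lemma mulX_parity_polyS n :
  x * parity_poly a n.+1 = parity_poly a n.+2 + lam n.+1 *: parity_poly a n.
Proof.
rewrite (@parity_poly_widen n.+1 n.+3) // (@parity_poly_widen n.+2 n.+3) //.
rewrite (@parity_poly_widen n n.+2) // scaler_sumr.
have -> : \sum_(k < n.+2) lam n.+1 *: (a n k *: x ^+ (n - 2 * k)) =
    \sum_(k < n.+3) (if k : nat is k'.+1 then lam n.+1 * a n k' else 0) *: x ^+ (n.+2 - 2 * k).
  rewrite [RHS]big_ord_recl scale0r add0r; apply: eq_bigr => k _.
  by rewrite lift0 scalerA; congr (_ *: x ^+ _); lia.
rewrite mulr_sumr -big_split; apply: eq_bigr => -[k k_lt] _ /=.
rewrite -scalerAr -exprS -scalerDl.
have [k_big | k_small] := ltnP n.+2 (2 * k).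
  case: k k_big {k_lt} => [//|k] k_big.
  rewrite (a_out (n := n.+1)) ?(a_out (n := n.+2)) ?(a_out (n := n)) //; try lia.
  by rewrite mulr0 addr0 !scale0r.
have -> : a n.+2 k + (if k is k'.+1 then lam n.+1 * a n k' else 0) = a n.+1 k.
  by case: k k_small {k_lt} => [|k] k_small; rewrite ?a_0 ?addr0 // (a_rec k_small).
have [k_le | k_eq] := leqP (2 * k) n.+1; first by congr (_ *: x ^+ _); lia.
by rewrite a_out ?scale0r.
Qed.

End ParityPolynomials.

Section ThreeTermInversion.
Variables (F : fieldType) (A : algType F) (x : A).
Variables (p : nat -> A) (lam : nat -> F) (c : nat -> nat -> F).
Hypotheses (p0 : p 0 = 1) (mulX_p0 : x * p 0 = p 1).
Hypothesis mulX_pS : forall n, x * p n.+1 = p n.+2 + lam n.+1 *: p n.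
Hypotheses (c_0 : forall n, c n 0 = 1) (c_out : forall n k, (n < 2 * k)%N -> c n k = 0).
Hypothesis c_rec : forall n k, (2 * k < n)%N ->
  c n.+1 k.+1 = c n k.+1 + c n k * lam (n - 2 * k).

Let down n k := if (2 * k < n)%N then c n k * lam (n - 2 * k) else 0.

Lemma c_step n k : c n.+1 k.+1 = c n k.+1 + down n k.
Proof.
rewrite /down; case: ifP => [/c_rec // | k_big].
by rewrite !c_out ?addr0 //; lia.
Qed.

Lemma mulX_c_term n k :
  c n k *: (x * p (n - 2 * k)) = c n k *: p (n.+1 - 2 * k) + down n k *: p (n - 2 * k).-1.
Proof.
rewrite /down; case: (ltngtP (2 * k) n) => k_cmp.
- have [r r_eq] : exists r, (n - 2 * k = r.+1)%N by exists (n - 2 * k).-1; lia.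
  have -> : (n.+1 - 2 * k = r.+2)%N by lia.
  by rewrite r_eq mulX_pS scalerDr scalerA.
- by rewrite c_out // !scale0r addr0.
- by rewrite k_cmp subnn mulX_p0 scale0r addr0 -k_cmp subSnn.
Qed.

Lemma expX_expansion n : x ^+ n = \sum_(k < n.+1) c n k *: p (n - 2 * k).
Proof.
elim: n => [|n IHn]; first by rewrite big_ord1 c_0 p0 scale1r expr0.
rewrite exprS IHn mulr_sumr.
under eq_bigr => k _ do rewrite -scalerAr mulX_c_term.
rewrite big_split /= [in RHS]big_ord_recl.
under [in RHS]eq_bigr => k _ do rewrite (c_step n k) scalerDl.
rewrite big_split /= addrA; congr (_ + _).
  rewrite big_ord_recl !c_0; congr (_ + _).
  rewrite [RHS]big_ord_recr /= c_out ?scale0r ?addr0; last lia.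
  by apply: eq_bigr.
by apply: eq_bigr => k _; rewrite -[bump 0 k]/k.+1; congr (_ *: p _); lia.
Qed.

End ThreeTermInversion.

Section Coefficients.
Variables (F : fieldType) (q : F) (m : nat) (s : F).
Hypothesis q_not_root1 : forall j : nat, (0 < j)%N -> q ^+ j != 1.

(* Once q-factorials and q-Pochhammer symbols are peeled down to a few
   atoms, each coefficient identity is rational in [q], [s] and powers of
   [q]; [qnonzero] refolds those powers so that the side conditions of
   [field] match the nonvanishing lemmas. *)
Ltac qnonzero :=
  rewrite ?mulrN ?opprK;
  repeat (rewrite -exprD || rewrite -exprS || rewrite -exprSr);
  rewrite -?[- q]/(- q ^+ 1) -?[1 + q]/(1 + q ^+ 1);
  first [ exact: oner_neq0
        | exact: (qfact_neq0 q_not_root1)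
        | apply: (subr1X_neq0 q_not_root1); lia
        | apply: (addr1X_neq0 q_not_root1); lia
        | apply: (qpochNX_neq0 q_not_root1); lia ].

Ltac qfield :=
  rewrite ?qpochS ?qpoch0 ?qfactS ?qfact0 ?(qintE _ (q_neq1 q_not_root1));
  rewrite ?(mulSn, mulnS, mul1n, exprS, exprD, expr0);
  by field; repeat (apply/andP; split); qnonzero.

(* [vterm d k] is the coefficient of [x ^+ d] in [v_(d + 2k)] and [cterm d k]
   that of [v_d] in the expansion of [x ^+ (d + 2k)]; indexing by [d] keeps
   the truncated subtraction [n - 2k] out of the coefficient identities. *)
Definition vterm (d k : nat) : F :=
  (- s) ^+ k * q ^+ (k * k)
  * (qfact q (d + k + k) / (qfact q k * qfact q d))
  * (qfact q (m + d + k).-1 / qfact q (m + d + k + k).-1)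
  / (qpoch q (- q) k * qpoch q (- q ^+ (m + d + k)) k).

Definition cterm (d k : nat) : F :=
  qfact q (d + k + k) / (qfact q k * qfact q d)
  * (qfact q (m + d) / qfact q (m + d + k))
  * (q ^+ k * s ^+ k / (qpoch q (- q) k * qpoch q (- q ^+ (m + d).+1) k)).

Definition vcoef (n k : nat) : F := if (2 * k <= n)%N then vterm (n - 2 * k) k else 0.
Definition ccoef (n k : nat) : F := if (2 * k <= n)%N then cterm (n - 2 * k) k else 0.
Definition vlam (n : nat) : F := vcoef n 1 - vcoef n.+1 1.

Lemma vterm_interior p k :
  vterm p k.+1 = vterm p.+1 k.+1 + (vterm (p + k + k) 1 - vterm (p + k + k).+1 1) * vterm p.+1 k.
Proof.
rewrite /vterm !(addnS, addSn, addn1, addnA, addn0) /=.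
rewrite (qpochNXSl _ (m + p + k).+1 k) (qpochNXS _ (m + p + k).+2 k).
rewrite (qpochNX_shift q_not_root1 (j := (m + p + k).+1) k) //.
qfield.
Qed.

Lemma vterm_boundary k :
  vterm 0 k.+2 + (vterm (k + k).+1 1 - vterm (k + k).+2 1) * vterm 0 k.+1 = 0.
Proof.
rewrite /vterm !(addnS, addSn, addn1, addnA, addn0, add0n) /=.
rewrite (qpochNXSl _ (m + k).+1 k).
qfield.
Qed.

Lemma cterm_interior p k :
  cterm p.+1 k.+1 = cterm p k.+1 + cterm p.+2 k * (vterm p 1 - vterm p.+1 1).
Proof.
rewrite /cterm /vterm !(addnS, addSn, addn1, addnA, addn0, add0n) /=.
rewrite (qpochNXSl _ (m + p).+2 k) (qpochNXSl _ (m + p).+1 k).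
rewrite (qpochNX_shift q_not_root1 (j := (m + p).+2) k) //.
qfield.
Qed.

Lemma cterm_boundary k : cterm 0 k.+1 = - (cterm 1 k * vterm 0 1).
Proof.
rewrite /cterm /vterm !(addnS, addSn, addn1, addnA, addn0, add0n) /=.
rewrite (qpochNXSl _ m.+1 k).
qfield.
Qed.

Lemma vterm_lead d : vterm d 0 = 1.
Proof. by rewrite /vterm !addn0; qfield. Qed.

Lemma cterm_lead d : cterm d 0 = 1.
Proof. by rewrite /cterm !addn0; qfield. Qed.

Lemma vcoef_eq n d k : n = (d + k + k)%N -> vcoef n k = vterm d k.
Proof. by move=> ->; rewrite /vcoef ifT; [congr vterm |]; lia. Qed.

Lemma ccoef_eq n d k : n = (d + k + k)%N -> ccoef n k = cterm d k.
Proof. by move=> ->; rewrite /ccoef ifT; [congr cterm |]; lia. Qed.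

Lemma vcoef_out n k : (n < 2 * k)%N -> vcoef n k = 0.
Proof. by move=> k_big; rewrite /vcoef leqNgt k_big. Qed.

Lemma ccoef_out n k : (n < 2 * k)%N -> ccoef n k = 0.
Proof. by move=> k_big; rewrite /ccoef leqNgt k_big. Qed.

Lemma vcoef_lead n : vcoef n 0 = 1.
Proof. by rewrite (@vcoef_eq n n) ?vterm_lead ?addn0. Qed.

Lemma ccoef_lead n : ccoef n 0 = 1.
Proof. by rewrite (@ccoef_eq n n) ?cterm_lead ?addn0. Qed.

Lemma vcoef_rec n k : (2 * k.+1 <= n.+2)%N ->
  vcoef n.+1 k.+1 = vcoef n.+2 k.+1 + vlam n.+1 * vcoef n k.
Proof.
case: k => [_ | k k_le]; first by rewrite vcoef_lead mulr1 addrC subrK.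
rewrite /vlam; case: (ltngtP n (k + k).+2) => [| n_gt | ->]; first lia.
  have [p ->] : exists p, n = (p + k + k).+3 by exists (n - (k + k).+3)%N; lia.
  rewrite (@vcoef_eq (p + k + k).+4 p k.+2) ?(@vcoef_eq (p + k + k).+4.+1 p.+1 k.+2)
    ?(@vcoef_eq (p + k + k).+4 (p + k.+1 + k.+1) 1)
    ?(@vcoef_eq (p + k + k).+4.+1 (p + k.+1 + k.+1).+1 1)
    ?(@vcoef_eq (p + k + k).+3 p.+1 k.+1); try lia.
  exact: vterm_interior.
rewrite (@vcoef_out (k + k).+3 k.+2) ?(@vcoef_eq (k + k).+4 0 k.+2)
  ?(@vcoef_eq (k + k).+3 (k + k).+1 1) ?(@vcoef_eq (k + k).+4 (k + k).+2 1)
  ?(@vcoef_eq (k + k).+2 0 k.+1); try lia.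
by rewrite vterm_boundary.
Qed.

Lemma ccoef_rec n k : (2 * k < n)%N ->
  ccoef n.+1 k.+1 = ccoef n k.+1 + ccoef n k * vlam (n - 2 * k).
Proof.
move=> k_lt; rewrite /vlam; case: (ltngtP n (k + k).+1) => [| n_gt | ->]; first lia.
  have [p ->] : exists p, n = (p + k + k).+2 by exists (n - (k + k).+2)%N; lia.
  have -> : ((p + k + k).+2 - 2 * k = p.+2)%N by lia.
  rewrite (@ccoef_eq (p + k + k).+3 p.+1 k.+1) ?(@ccoef_eq (p + k + k).+2 p k.+1)
    ?(@ccoef_eq (p + k + k).+2 p.+2 k) ?(@vcoef_eq p.+2 p 1) ?(@vcoef_eq p.+3 p.+1 1); try lia.
  exact: cterm_interior.
have -> : ((k + k).+1 - 2 * k = 1)%N by lia.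
rewrite (@ccoef_out (k + k).+1 k.+1) ?(@vcoef_out 1 1) ?(@ccoef_eq (k + k).+2 0 k.+1)
  ?(@ccoef_eq (k + k).+1 1 k) ?(@vcoef_eq 2 0 1); try lia.
by rewrite cterm_boundary add0r sub0r mulrN.
Qed.

Lemma vpoly_parity n : vpoly q m s n = parity_poly 'X vcoef n.
Proof.
case: n => [|n]; first by rewrite (parity_poly0 _ vcoef_lead).
have tail k : (n.+1 < 2 * k)%N -> vcoef n.+1 k *: 'X^(n.+1 - 2 * k) = 0 :> {poly F}.
  by move=> /vcoef_out ->; rewrite scale0r.
rewrite /vpoly /parity_poly (sum_vanishing_tail _ tail); last lia.
apply: eq_bigr => -[k /= k_le] _.
rewrite (@vcoef_eq _ (n.+1 - 2 * k)); last lia.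
congr (_ *: _); rewrite /vterm.
by congr (_ * (qfact q _ / _) * (qfact q _ / qfact q _) / (_ * qpoch q (- q ^+ _) _)); lia.
Qed.

Lemma expX_vpoly n :
  'X^n = \sum_(k < n./2.+1) ccoef n k *: vpoly q m s (n - 2 * k).
Proof.
have vpoly_rec k : 'X * vpoly q m s k.+1 = vpoly q m s k.+2 + vlam k.+1 *: vpoly q m s k.
  by rewrite !vpoly_parity (mulX_parity_polyS _ vcoef_lead vcoef_out vcoef_rec).
have vpoly1 : 'X * vpoly q m s 0 = vpoly q m s 1.
  by rewrite !vpoly_parity (mulX_parity_poly0 _ vcoef_lead vcoef_out).
have tail k : (n < 2 * k)%N -> ccoef n k *: vpoly q m s (n - 2 * k) = 0.
  by move=> /ccoef_out ->; rewrite scale0r.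
rewrite (expX_expansion _ vpoly1 vpoly_rec ccoef_lead ccoef_out ccoef_rec) //.
by rewrite (sum_vanishing_tail _ tail) //; lia.
Qed.

Lemma ccoef_half n : ccoef (2 * n) n = q ^+ n * s ^+ n
  / (qpoch q (- q) n * qpoch q (- q ^+ m.+1) n)
  * (qfact q (2 * n) * qfact q m / (qfact q n * qfact q (m + n))).
Proof.
rewrite (@ccoef_eq _ 0) /cterm ?add0n ?addn0; last lia.
by rewrite addnn -mul2n; qfield.
Qed.

End Coefficients.

Lemma dual_eval_expansion (F : fieldType) (V : lmodType F) (Phi : V -> F)
    (p : nat -> V) (c : nat -> F) (y : V) n :
  {morph Phi : u v / u + v} -> (forall a u, Phi (a *: u) = a * Phi u) ->
  (forall j, Phi (p j) = (j == 0)%:R) ->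
  y = \sum_(k < n./2.+1) c k *: p (n - 2 * k)%N ->
  Phi y = if odd n then 0 else c n./2.
Proof.
move=> Phi_add Phi_scale Phi_p ->.
have Phi0 : Phi 0 = 0 by apply: (addrI (Phi 0)); rewrite -Phi_add !addr0.
rewrite (big_morph Phi Phi_add Phi0) (bigD1 ord_max) //= big1 => [|k k_neq]; last first.
  have k_lt : (k < n./2)%N by rewrite ltn_neqAle -ltnS ltn_ord andbT -val_eqE in k_neq *.
  rewrite Phi_scale Phi_p.
  by rewrite (_ : (n - 2 * k == 0)%N = false) ?mulr0 //; apply/negbTE; lia.
rewrite Phi_scale Phi_p addr0 -[X in (X - _)%N](odd_double_half n) mul2n addnK.
by case: (odd n); rewrite ?mulr0 ?mulr1.
Qed.

Theorem mainTheorem13 (F : fieldType) (q : F)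
    (hq : forall j : nat, (0 < j)%N -> q ^+ j != 1) (m : nat) :
  (forall (s : F) (n : nat),
     'X ^+ n =
     \sum_(k < n./2.+1)
       ((qfact q n / (qfact q k * qfact q (n - 2 * k)))
        * (qfact q (n + m - 2 * k) / qfact q (n + m - k))
        * (q ^+ k * s ^+ k
           / (qpoch q (- q) k * qpoch q (- q ^+ (n + m + 1 - 2 * k)) k)))
       *: vpoly q m s (n - 2 * k))
  /\
  (forall Phi : {poly F} -> F,
     (forall p r : {poly F}, Phi (p + r) = Phi p + Phi r) ->
     (forall (c : F) (p : {poly F}), Phi (c *: p) = c * Phi p) ->
     (forall n : nat, Phi (vpoly q m 1 n) = (n == 0%N)%:R) ->
     forall n : nat,
       Phi ('X ^+ (2 * n).+1) = 0 /\
       Phi ('X ^+ (2 * n)) =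
         q ^+ n / (qpoch q (- q) n * qpoch q (- q ^+ m.+1) n)
         * (qfact q (2 * n) * qfact q m / (qfact q n * qfact q (m + n)))).
Proof.
split=> [s n | Phi Phi_add Phi_scale Phi_v n].
  rewrite (expX_vpoly m s hq n); apply: eq_bigr => -[k /= k_le] _.
  rewrite (@ccoef_eq _ _ _ _ _ (n - 2 * k)); last lia.
  congr (_ *: _); rewrite /cterm.
  by congr (qfact q _ / _ * (qfact q _ / qfact q _) * (_ / (_ * qpoch q (- q ^+ _) _))); lia.
have Phi_X N := dual_eval_expansion Phi_add Phi_scale Phi_v (expX_vpoly m 1 hq N).
rewrite !Phi_X /= oddM /=; have -> : (2 * n)./2 = n by lia.
by rewrite (ccoef_half m 1 hq) expr1n mulr1.
Qed.
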